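(* Let $\mathcal{X}=(\mathcal{X}_t)_{t\ge0}$ be a continuous-time Markov chain on a finite state space $E$ with rate matrix $(Q(i,j))_{i,j\in E}$, and let $W:E\to\mathbb{R}$ be such that $Q(i,j)>0$ implies $W(j)>W(i)$ (a Markov chain with strictly monotone orbits with respect to $W$). Define $\Psi:\mathbb{R}^E\to\mathbb{R}$ by $\Psi(p)=\sum_{i\in E}p(i)W(i)$. Then the forward equation \[ \dot p_t=\sum_{i\in E}\sum_{j\in E}p_t(i)Q(i,j)(j-i) \] for the law $p_t\in\mathbb{R}^E$ of $\mathcal{X}_t$ is equivalent to \[ \dot p_t=K(p_t)\nabla\Psi(p_t), \] where $K$ takes values in the symmetric positive semi-definite $E\times E$ matrices, is continuous on the set $\mathcal{P}(E)$ of probability vectors on $E$, and is smooth on its interior.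
   Context: Vectors in $\mathbb{R}^E$ are written as formal sums $p=\sum_{i\in E}p(i)\,i$, each $i\in E$ being identified with the corresponding standard basis vector; $\nabla$ is the Euclidean gradient on $\mathbb{R}^E$. A rate matrix has nonnegative off-diagonal entries and rows summing to zero. *)

From HB Require Import structures.
From mathcomp Require Import all_boot all_order all_algebra.
From mathcomp Require Import all_classical all_reals all_analysis.
Set Implicit Arguments. Unset Strict Implicit. Unset Printing Implicit Defensive.
Import Order.TTheory GRing.Theory Num.Theory.
Import numFieldNormedType.Exports.
Local Open Scope classical_set_scope.
Local Open Scope ring_scope.

(* The finite state space E is represented by 'I_n; vectors in R^E are
   row vectors 'rV[R]_n, and p 0 i is the coordinate p(i). *)

Section Defs.
Variable R : realType.

Definition rate_matrix (n : nat) (Q : 'M[R]_n) : Prop :=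
  (forall i j : 'I_n, i != j -> 0 <= Q i j) /\ (forall i : 'I_n, \sum_j Q i j = 0).

Definition prob_vec (n : nat) : set 'rV[R]_n :=
  [set p | (forall i, 0 <= p 0 i) /\ \sum_i p 0 i = 1].

(* open set of vectors with all coordinates positive (open neighbourhood of
   the relative interior of P(E)) *)
Definition pos_orthant (n : nat) : set 'rV[R]_n :=
  [set p | forall i, 0 < p 0 i].

Definition evec (n : nat) (i : 'I_n) : 'rV[R]_n := delta_mx 0 i.

Definition forward_field (n : nat) (Q : 'M[R]_n) (p : 'rV[R]_n) : 'rV[R]_n :=
  \sum_i \sum_j (p 0 i * Q i j) *: (evec j - evec i).

Definition Psi (n : nat) (W : 'I_n -> R) (p : 'rV[R]_n) : R :=
  \sum_i p 0 i * W i.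

Definition grad (n : nat) (f : 'rV[R]_n -> R) (p : 'rV[R]_n) : 'rV[R]_n :=
  \row_i 'D_(evec i) f p.

Fixpoint Ck (n : nat) (k : nat) (U : set 'rV[R]_n) (f : 'rV[R]_n -> R) : Prop :=
  match k with
  | 0 => {within U, continuous f}
  | k'.+1 => (forall x v, U x -> derivable f x v) /\
             (forall v, Ck k' U ('D_v f))
  end.

Definition smooth_on (n : nat) (U : set 'rV[R]_n) (f : 'rV[R]_n -> R) : Prop :=
  forall k, Ck k U f.

Definition sym_psd (n : nat) (M : 'M[R]_n) : Prop :=
  M^T = M /\ forall v : 'cV[R]_n, 0 <= (v^T *m M *m v) 0 0.

End Defs.

From HB Require Import structures.
From mathcomp Require Import all_boot all_order all_algebra.
From mathcomp Require Import all_classical all_reals all_analysis.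
From mathcomp Require Import ring.
Import Order.TTheory GRing.Theory Num.Theory.
Import numFieldNormedType.Exports.
Local Open Scope classical_set_scope.
Local Open Scope ring_scope.
Set Implicit Arguments. Unset Strict Implicit. Unset Printing Implicit Defensive.

(** Since W increases strictly along every jump, each positive rate factors as
   Q(k,l) = c(k,l) (W(l) - W(k)) with a conductance c(k,l) >= 0, and
   W(l) - W(k) = (l - k) . grad Psi because grad Psi = W is constant.  Hence
   the flux p(k) Q(k,l) (l - k) equals p(k) c(k,l) (l - k)(l - k)^T grad Psi,
   and K(p) = sum_k p(k) sum_l c(k,l) (l - k)(l - k)^T works: it is a
   nonnegative combination of Gram matrices on P(E), and linear in p, hence
   continuous and smooth everywhere. *)

Section LinearForm.
Variables (R : realType) (n : nat).

Definition lin_form (a : 'I_n -> R) (p : 'rV[R]_n) : R := \sum_k p 0 k * a k.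

Lemma lin_form_continuous a : continuous (lin_form a).
Proof.
apply: continuous_big => [|k _ x]; first exact: add_continuous.
apply: continuousM; last exact: cst_continuous.
exact: coord_continuous.
Qed.

Lemma lin_formDZ a h v x :
  lin_form a (h *: v + x) = h * lin_form a v + lin_form a x.
Proof.
rewrite /lin_form mulr_sumr -big_split; apply: eq_bigr => k _.
by rewrite !mxE mulrDl mulrA.
Qed.

Instance is_derive_lin_form a x v : is_derive x v (lin_form a) (lin_form a v).
Proof.
suff quotient_cvg :
    (fun h : R => h^-1 *: ((lin_form a \o shift x) (h *: v) - lin_form a x))
      @ 0^' --> lin_form a v.
  by split; [apply/cvg_ex; exists (lin_form a v) | exact: cvg_lim].
apply: cvg_near_cst; near=> h.
rewrite /= lin_formDZ addrK /GRing.scale /= mulrA mulVf ?mul1r //.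
near: h; exact: nbhs_dnbhs_neq.
Unshelve. all: by end_near.
Qed.

Lemma Ck_cst k U (c : R) : Ck k U (fun _ : 'rV[R]_n => c).
Proof.
elim: k c => [|k IHk] c /=.
  by apply: continuous_subspaceT => x; exact: cst_continuous.
split=> [x v _|v]; first exact: derivable_cst.
have -> : 'D_v (fun _ : 'rV[R]_n => c) = (fun _ => 0).
  by apply/funext => x; rewrite derive_cst.
exact: IHk.
Qed.

Lemma smooth_on_lin_form a U : smooth_on U (lin_form a).
Proof.
case=> [|k] /=; first exact/continuous_subspaceT/lin_form_continuous.
split=> [x v _|v]; first exact: ex_derive.
have -> : 'D_v (lin_form a) = (fun _ => lin_form a v).
  by apply/funext => x; rewrite derive_val.
exact: Ck_cst.
Qed.

Lemma lin_form_evec a i : lin_form a (evec R i) = a i.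
Proof.
rewrite /lin_form (bigD1 i) //= big1 => [|k /negbTE ki].
  by rewrite mxE !eqxx mul1r addr0.
by rewrite mxE ki andbF mul0r.
Qed.

Lemma grad_lin_form a p : grad (lin_form a) p = \row_i a i.
Proof. by apply/rowP => i; rewrite !mxE derive_val lin_form_evec. Qed.

End LinearForm.

Section SymPsdCone.
Variables (R : realType) (n : nat).

Lemma sym_psdD (M N : 'M[R]_n) : sym_psd M -> sym_psd N -> sym_psd (M + N).
Proof.
move=> [symM psdM] [symN psdN]; split; first by rewrite linearD /= symM symN.
by move=> v; rewrite mulmxDr mulmxDl mxE addr_ge0.
Qed.

Lemma sym_psdZ (c : R) (M : 'M[R]_n) : 0 <= c -> sym_psd M -> sym_psd (c *: M).
Proof.
move=> c_ge0 [symM psdM]; split; first by rewrite linearZ /= symM.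
by move=> v; rewrite -scalemxAr -scalemxAl mxE mulr_ge0.
Qed.

Lemma sym_psd_gram (d : 'rV[R]_n) : sym_psd (d^T *m d).
Proof.
split=> [|v]; first by rewrite trmx_mul trmxK.
have -> : v^T *m (d^T *m d) *m v = (d *m v)^T *m (d *m v).
  by rewrite trmx_mul !mulmxA.
rewrite mxE; apply: sumr_ge0 => k _; by rewrite mxE -expr2 sqr_ge0.
Qed.

Lemma sym_psd_sum (I : Type) (r : seq I) (c : I -> R) (M : I -> 'M[R]_n) :
  (forall i, 0 <= c i) -> (forall i, sym_psd (M i)) ->
  sym_psd (\sum_(i <- r) c i *: M i).
Proof.
move=> c_ge0 psdM; apply: (big_ind (@sym_psd R n)) => [|A B|i _].
- by split=> [|v]; rewrite ?trmx0 // mulmx0 mul0mx mxE.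
- exact: sym_psdD.
- exact: sym_psdZ.
Qed.

End SymPsdCone.

Section Onsager.
Variables (R : realType) (n : nat) (Q : 'M[R]_n) (W : 'I_n -> R).

Definition jump (k l : 'I_n) : 'rV[R]_n := evec R l - evec R k.

Definition conductance (k l : 'I_n) : R :=
  if 0 < Q k l then Q k l / (W l - W k) else 0.

Definition jump_mx (k : 'I_n) : 'M[R]_n :=
  \sum_l conductance k l *: ((jump k l)^T *m jump k l).

Definition onsager_mx (p : 'rV[R]_n) : 'M[R]_n := \sum_k p 0 k *: jump_mx k.

Lemma onsager_mx_continuous : continuous onsager_mx.
Proof.
apply: continuous_big => [|k _ x]; first exact: add_continuous.
by apply: continuousZr_tmp; exact: coord_continuous.
Qed.

Lemma onsager_mx_entry i j :
  (fun p => onsager_mx p i j) = lin_form (fun k => jump_mx k i j).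
Proof.
by apply/funext => p; rewrite summxE; apply: eq_bigr => k _; rewrite mxE.
Qed.

Lemma row_mul_jump k l : (\row_i W i) *m (jump k l)^T = (W l - W k)%:M.
Proof.
apply/matrixP => a b; rewrite !ord1 !mxE eqxx mulr1n.
rewrite -(lin_form_evec W l) -(lin_form_evec W k) /lin_form -sumrB.
by apply: eq_bigr => m _; rewrite !mxE; ring.
Qed.

Hypothesis Q_offdiag_ge0 : forall k l : 'I_n, k != l -> 0 <= Q k l.
Hypothesis W_increases : forall k l : 'I_n, 0 < Q k l -> W k < W l.

Lemma conductance_ge0 k l : 0 <= conductance k l.
Proof.
rewrite /conductance; case: ifP => // Qkl_gt0.
by rewrite divr_ge0 ?subr_ge0 ?ltW ?W_increases.
Qed.

Lemma conductanceK k l :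
  (conductance k l * (W l - W k)) *: jump k l = Q k l *: jump k l.
Proof.
rewrite /conductance; case: ifP => [Qkl_gt0|Qkl_le0].
  by rewrite divfK // subr_eq0 gt_eqF // W_increases.
have [<-|kl] := eqVneq k l; first by rewrite /jump !subrr !scaler0.
have := Q_offdiag_ge0 kl; rewrite le_eqVlt Qkl_le0 orbF => /eqP <-.
by rewrite mul0r !scale0r.
Qed.

Lemma onsager_mx_psd (p : 'rV[R]_n) :
  (forall k, 0 <= p 0 k) -> sym_psd (onsager_mx p).
Proof.
move=> p_ge0; apply: sym_psd_sum => // k.
apply: sym_psd_sum => [l|l]; [exact: conductance_ge0 | exact: sym_psd_gram].
Qed.

Lemma forward_field_onsager (p : 'rV[R]_n) :
  forward_field Q p = (onsager_mx p *m (grad (Psi W) p)^T)^T.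
Proof.
rewrite [Psi W]/(lin_form W) grad_lin_form /onsager_mx mulmx_suml linear_sum.
apply: eq_bigr => k _; rewrite -scalemxAl linearZ /= /jump_mx mulmx_suml.
rewrite linear_sum scaler_sumr; apply: eq_bigr => l _.
rewrite -scalemxAl linearZ /= -mulmxA trmx_mul trmxK trmx_mul trmxK.
rewrite row_mul_jump mul_scalar_mx.
by rewrite -!scalerA [conductance k l *: _]scalerA conductanceK.
Qed.

End Onsager.

Theorem theorem5p2 (R : realType) (n : nat) (Q : 'M[R]_n) (W : 'I_n -> R) :
  rate_matrix Q ->
  (forall i j : 'I_n, 0 < Q i j -> W i < W j) ->
  exists K : 'rV[R]_n -> 'M[R]_n,
    (forall p, @prob_vec R n p -> sym_psd (K p)) /\
    {within @prob_vec R n, continuous K} /\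
    (forall i j : 'I_n, smooth_on (@pos_orthant R n) (fun p => K p i j)) /\
    (forall p, @prob_vec R n p ->
       forward_field Q p = (K p *m (grad (Psi W) p)^T)^T).
Proof.
move=> [Q_offdiag_ge0 _] W_increases; exists (onsager_mx Q W).
split; first by move=> p [p_ge0 _]; exact: onsager_mx_psd.
split; first exact/continuous_subspaceT/onsager_mx_continuous.
split; first by move=> i j; rewrite onsager_mx_entry; exact: smooth_on_lin_form.
by move=> p _; exact: forward_field_onsager.
Qed.
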